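(* Let $k\ge2$. For every nonzero $\xi\in\mathbb{R}^4$ the sequence $0\leftarrow\mathbb{C}^{k+1}\xleftarrow{D_0^{(k)}(\xi)^t}\mathbb{C}^{2k}\xleftarrow{D_1^{(k)}(\xi)^t}\mathbb{C}^{k-1}\leftarrow0$ is exact.
   Context: Put $a=\frac1i(\xi_0-i\xi_1)$, $\bar a'=\frac1i(\xi_0+i\xi_1)$, $b=\frac1i(\xi_2-i\xi_3)$, $\bar b'=\frac1i(\xi_2+i\xi_3)$. $D_0^{(k)}(\xi)$ is the $(2k)\times(k+1)$ matrix whose rows $2j$, $2j+1$ ($j=0,\dots,k-1$, rows/columns indexed from $0$) are: row $2j$ has entry $-\bar b'$ in column $j$ and $-\bar a'$ in column $j+1$; row $2j+1$ has entry $a$ in column $j$ and $-b$ in column $j+1$; all other entries $0$. $D_1^{(k)}(\xi)$ is the $(k-1)\times(2k)$ matrix whose row $j$ ($j=0,\dots,k-2$) has entries $-a,-\bar b',b,-\bar a'$ in columns $2j,2j+1,2j+2,2j+3$ and zeros elsewhere. (These are the symbols of the $k$-Cauchy–Fueter operators, obtained by replacing $\partial_{x_l}$ by $\frac1i\xi_l$.) $t$ denotes transpose; exactness means $D_0^{(k)}(\xi)^t$ is surjective, $D_1^{(k)}(\xi)^t$ injective, and $\operatorname{Im}D_1^{(k)}(\xi)^t=\ker D_0^{(k)}(\xi)^t$. *)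

From HB Require Import structures.
From mathcomp Require Import all_boot all_order all_algebra.
From mathcomp Require Import complex.
From mathcomp Require Import Rstruct.
From Stdlib Require Rdefinitions.
Set Implicit Arguments. Unset Strict Implicit. Unset Printing Implicit Defensive.
Import Order.TTheory GRing.Theory Num.Theory.
Local Open Scope ring_scope.

Notation C := (complex Rdefinitions.R).

Definition rC (x : Rdefinitions.R) : C := (x%:C)%C.

Section Symbols.
Variable xi : 'I_4 -> Rdefinitions.R.
Let x (l : nat) : C := rC (xi (inord l)).
Let iC : C := 'i%C.

Definition sym_a  : C := iC^-1 * (x 0 - iC * x 1).
Definition sym_a' : C := iC^-1 * (x 0 + iC * x 1).
Definition sym_b  : C := iC^-1 * (x 2 - iC * x 3).
Definition sym_b' : C := iC^-1 * (x 2 + iC * x 3).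
End Symbols.

Definition D0 (k : nat) (xi : 'I_4 -> Rdefinitions.R) : 'M[C]_((2 * k)%N, k.+1) :=
  \matrix_(r < (2 * k)%N, c < k.+1)
    let j := divn r 2 in
    if ~~ odd r then
      (if c == j :> nat then - sym_b' xi
       else if c == j.+1 :> nat then - sym_a' xi else 0)
    else
      (if c == j :> nat then sym_a xi
       else if c == j.+1 :> nat then - sym_b xi else 0).

Definition D1 (k : nat) (xi : 'I_4 -> Rdefinitions.R) : 'M[C]_((k - 1)%N, (2 * k)%N) :=
  \matrix_(j < (k - 1)%N, c < (2 * k)%N)
    if c == (2 * j)%N :> nat then - sym_a xi
    else if c == (2 * j).+1 :> nat then - sym_b' xi
    else if c == (2 * j).+2 :> nat then sym_b xi
    else if c == (2 * j).+3 :> nat then - sym_a' xi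
    else 0.

From HB Require Import structures.
From mathcomp Require Import all_boot all_order all_algebra.
From mathcomp Require Import complex Rstruct.
From mathcomp Require Import ring zify.
From Stdlib Require Rdefinitions.
Import GRing.Theory Num.Theory.
Set Implicit Arguments. Unset Strict Implicit. Unset Printing Implicit Defensive.
Local Open Scope ring_scope.

(* Group the coordinates of C^{2k} into pairs (v_{2j}, v_{2j+1}).  On a pair,
   D_0^t acts through the 2x2 map (phi, psi) of determinant
   N = a a' + b b' = -|xi|^2, which is invertible for xi <> 0: component c of
   D_0^t v is phi(pair c) + psi(pair (c-1)).  In the coordinates
   p_j = phi(pair j), q_j = psi(pair j) the complex becomes elementary:
   D_0^t v = (p_c + q_{c-1})_c, and D_1^t z is the vector with q_j = N z_j and
   p_j = -N z_{j-1}. *)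

Section Coefficients.
Variable R : nzRingType.

(* Columns read as zero-padded sequences: the boundary components of D_0^t and
   D_1^t then need no special case. *)
Definition colseq n (v : 'cV[R]_n) (m : nat) : R :=
  if insub m is Some i then v i 0 else 0.

Definition shift (s : nat -> R) (m : nat) : R := if m is m'.+1 then s m' else 0.

Lemma colseq_ord n (v : 'cV[R]_n) (i : 'I_n) : colseq v i = v i 0.
Proof. by rewrite /colseq valK. Qed.

Lemma colseq_out n (v : 'cV[R]_n) m : (n <= m)%N -> colseq v m = 0.
Proof. by move=> le_nm; rewrite /colseq insubN // -leqNgt. Qed.

Lemma shiftE (s : nat -> R) m : (0 < m)%N -> shift s m = s m.-1.
Proof. by case: m. Qed.

Lemma shift_colseq_out n (v : 'cV[R]_n) j : (n <= j.-1)%N -> shift (colseq v) j = 0.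
Proof. by case: j => //= j; exact: colseq_out. Qed.

Lemma colseq_col n (f : nat -> R) m : (m < n)%N -> colseq (\col_(i < n) f i) m = f m.
Proof. by move=> lt_mn; rewrite /colseq insubT mxE. Qed.

Lemma colseq0 n m : colseq (0 : 'cV[R]_n) m = 0.
Proof. by rewrite /colseq; case: insub => // i; rewrite mxE. Qed.

Lemma sum_colseq n (v : 'cV[R]_n) m (g : R) :
  \sum_(i < n) (if i == m :> nat then g else 0) * v i 0 = g * colseq v m.
Proof.
have [lt_mn | le_nm] := ltnP m n; last first.
  rewrite colseq_out // mulr0 big1 // => i _.
  by rewrite ifN ?mul0r // neq_ltn (leq_trans (ltn_ord i)).
rewrite (bigD1 (Ordinal lt_mn)) //= eqxx -[m]/(nat_of_ord (Ordinal lt_mn)) colseq_ord.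
rewrite big1 ?addr0 // => i /negbTE ne_i.
by rewrite -(inj_eq val_inj) /= in ne_i; rewrite ne_i mul0r.
Qed.

Lemma sum_colseq_shift n (v : 'cV[R]_n) m (g : R) :
  \sum_(i < n) (if m == i.+1 then g else 0) * v i 0 = g * shift (colseq v) m.
Proof.
case: m => [|m] /=; last by under eq_bigr do rewrite eqSS eq_sym; rewrite sum_colseq.
by rewrite big1 ?mulr0 // => i _; rewrite mul0r.
Qed.

Definition evens n (v : 'cV[R]_n) (j : nat) : R := colseq v (2 * j)%N.
Definition odds n (v : 'cV[R]_n) (j : nat) : R := colseq v (2 * j)%N.+1.

Lemma eq_evens_odds n (v w : 'cV[R]_n) :
  evens v =1 evens w -> odds v =1 odds w -> v = w.
Proof.
move=> Eeven Eodd; apply/colP => i; rewrite -!colseq_ord.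
rewrite -(odd_double_half i) -mul2n; case: (odd i) => /=; [exact: Eodd | exact: Eeven].
Qed.

Lemma evens_out k (v : 'cV[R]_(2 * k)) j : (k <= j)%N -> evens v j = 0.
Proof. by move=> le_kj; rewrite /evens colseq_out // leq_mul2l. Qed.

Lemma odds_out k (v : 'cV[R]_(2 * k)) j : (k <= j)%N -> odds v j = 0.
Proof. by move=> le_kj; rewrite /odds colseq_out // ltnW // ltnS leq_mul2l. Qed.

Definition interleave k (u w : nat -> R) : 'cV[R]_(2 * k) :=
  \col_(r < (2 * k)%N) if odd r then w r./2 else u r./2.

Lemma evens_interleave k u w j : (j < k)%N -> evens (interleave k u w) j = u j.
Proof.
move=> lt_jk; rewrite /evens (colseq_col (fun r => if odd r then w r./2 else u r./2)).
  by rewrite mul2n odd_double doubleK.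
by rewrite ltn_pmul2l.
Qed.

Lemma odds_interleave k u w j : (j < k)%N -> odds (interleave k u w) j = w j.
Proof.
move=> lt_jk; rewrite /odds (colseq_col (fun r => if odd r then w r./2 else u r./2)).
  by rewrite mul2n /= odd_double uphalf_double.
by lia.
Qed.
End Coefficients.

Section PairMap.
Variables (F : fieldType) (a a' b b' : F).
Local Notation N := (a * a' + b * b').
Hypothesis N_neq0 : N != 0.

Definition phi (x y : F) : F := - b' * x + a * y.
Definition psi (x y : F) : F := - a' * x - b * y.

Lemma phi0 : phi 0 0 = 0. Proof. by rewrite /phi !mulr0 addr0. Qed.
Lemma psi0 : psi 0 0 = 0. Proof. by rewrite /psi !mulr0 subr0. Qed.

Definition unpair1 (p q : F) : F := (- b * p - a * q) / N.
Definition unpair2 (p q : F) : F := (a' * p - b' * q) / N.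

Lemma phi_unpair p q : phi (unpair1 p q) (unpair2 p q) = p.
Proof. by rewrite /phi /unpair1 /unpair2; field. Qed.

Lemma psi_unpair p q : psi (unpair1 p q) (unpair2 p q) = q.
Proof. by rewrite /psi /unpair1 /unpair2; field. Qed.

Lemma phi_psi_inj x y x' y' :
  phi x y = phi x' y' -> psi x y = psi x' y' -> x = x' /\ y = y'.
Proof.
have unpairK1 u v : unpair1 (phi u v) (psi u v) = u by rewrite /unpair1 /phi /psi; field.
have unpairK2 u v : unpair2 (phi u v) (psi u v) = v by rewrite /unpair2 /phi /psi; field.
move=> Ephi Epsi; split; [rewrite -(unpairK1 x y) | rewrite -(unpairK2 x y)].
  by rewrite Ephi Epsi unpairK1.
by rewrite Ephi Epsi unpairK2.
Qed.
End PairMap.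

Lemma sum_ord4 (R : nzRingType) (f : 'I_4 -> R) :
  \sum_(l < 4) f l = f (inord 0) + f (inord 1) + f (inord 2) + f (inord 3).
Proof.
transitivity (\sum_(l < 4) f (inord l)); first by apply: eq_bigr => l _; rewrite inord_val.
by rewrite -(big_mkord xpredT (fun l => f (inord l))) unlock /= addr0 !addrA.
Qed.

Lemma sym_norm (xi : 'I_4 -> Rdefinitions.R) :
  sym_a xi * sym_a' xi + sym_b xi * sym_b' xi = - rC (\sum_(l < 4) xi l ^+ 2).
Proof.
rewrite /sym_a /sym_a' /sym_b /sym_b' sum_ord4 /rC !rmorphD !rmorphXn /=.
set s := 'i%C; set x0 := (_ (inord 0))%:C%C; set x1 := (_ (inord 1))%:C%C.
set x2 := (_ (inord 2))%:C%C; set x3 := (_ (inord 3))%:C%C.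
have s2 : s ^+ 2 = -1 by exact: sqr_i.
have si : s^-1 ^+ 2 = -1 by rewrite exprVn s2 invrN1.
transitivity (s^-1 ^+ 2 * (x0 ^+ 2 - s ^+ 2 * x1 ^+ 2 + x2 ^+ 2 - s ^+ 2 * x3 ^+ 2)); first by ring.
rewrite si s2; ring.
Qed.

Lemma sym_norm_neq0 (xi : 'I_4 -> Rdefinitions.R) :
  (exists l, xi l <> 0%R) -> sym_a xi * sym_a' xi + sym_b xi * sym_b' xi != 0.
Proof.
case=> l xil_neq0; rewrite sym_norm oppr_eq0 /rC fmorph_eq0.
apply: contra_notN xil_neq0 => /eqP sum_eq0; apply/eqP; rewrite -sqrf_eq0.
by apply/eqP/(psumr_eq0P _ sum_eq0) => // i _; exact: sqr_ge0.
Qed.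

Section Symbols.
Variables (k : nat) (xi : 'I_4 -> Rdefinitions.R).
Local Notation a := (sym_a xi).
Local Notation a' := (sym_a' xi).
Local Notation b := (sym_b xi).
Local Notation b' := (sym_b' xi).
Local Notation phi := (phi a b').
Local Notation psi := (psi a' b).
Local Notation N := (a * a' + b * b').

Lemma D0_entry (r : 'I_(2 * k)) (c : 'I_k.+1) :
  D0 k xi r c = (if r == (2 * c)%N :> nat then - b' else 0)
                + (if r == (2 * c)%N.+1 :> nat then a else 0)
                + shift (fun j => (if r == (2 * j)%N :> nat then - a' else 0)
                                   + (if r == (2 * j)%N.+1 :> nat then - b else 0)) c.
Proof.
rewrite mxE divn2; have := odd_double_half r; rewrite -mul2n.
move: (odd r) (r./2) => o j; move: (nat_of_ord r) (nat_of_ord c) => {}r [|{}c] /= Er;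
  case: o Er => /= Er; repeat (case: eqP => ? /=); rewrite ?addr0 ?add0r //; lia.
Qed.

Lemma D0t_mul v (c : 'I_k.+1) :
  ((D0 k xi)^T *m v) c 0 = phi (evens v c) (odds v c)
                           + shift (fun j => psi (evens v j) (odds v j)) c.
Proof.
rewrite mxE; under eq_bigr do rewrite mxE D0_entry !mulrDl.
rewrite !big_split /= !sum_colseq; case: c => [[|c] _] /=.
  by rewrite big1 ?addr0 // => r _; rewrite mul0r.
under eq_bigr do rewrite mulrDl.
by rewrite big_split /= !sum_colseq /phi /psi !mulNr.
Qed.

Lemma D1_entry_even (i : 'I_(k - 1)) (c : 'I_(2 * k)) m : c = (2 * m)%N :> nat ->
  D1 k xi i c = (if i == m :> nat then - a else 0) + (if m == i.+1 then b else 0).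
Proof.
rewrite mxE; move: (nat_of_ord i) (nat_of_ord c) => {}i {}c ->.
by repeat (case: eqP => ? /=); rewrite ?addr0 ?add0r //; lia.
Qed.

Lemma D1_entry_odd (i : 'I_(k - 1)) (c : 'I_(2 * k)) m : c = (2 * m)%N.+1 :> nat ->
  D1 k xi i c = (if i == m :> nat then - b' else 0) + (if m == i.+1 then - a' else 0).
Proof.
rewrite mxE; move: (nat_of_ord i) (nat_of_ord c) => {}i {}c ->.
by repeat (case: eqP => ? /=); rewrite ?addr0 ?add0r //; lia.
Qed.

Lemma evens_D1t z j :
  evens ((D1 k xi)^T *m z) j = - a * colseq z j + b * shift (colseq z) j.
Proof.
have [lt_jk | le_kj] := ltnP j k; last first.
  by rewrite evens_out // colseq_out ?shift_colseq_out ?mulr0 ?addr0 //; lia.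
have lt_2j : (2 * j < 2 * k)%N by rewrite ltn_pmul2l.
rewrite /evens -[(2 * j)%N]/(nat_of_ord (Ordinal lt_2j)) colseq_ord mxE.
under eq_bigr do rewrite mxE (@D1_entry_even _ (Ordinal lt_2j) j erefl) mulrDl.
by rewrite big_split /= sum_colseq sum_colseq_shift.
Qed.

Lemma odds_D1t z j :
  odds ((D1 k xi)^T *m z) j = - b' * colseq z j - a' * shift (colseq z) j.
Proof.
have [lt_jk | le_kj] := ltnP j k; last first.
  by rewrite odds_out // colseq_out ?shift_colseq_out ?mulr0 ?subr0 //; lia.
have lt_2j : ((2 * j).+1 < 2 * k)%N by lia.
rewrite /odds -[(2 * j)%N.+1]/(nat_of_ord (Ordinal lt_2j)) colseq_ord mxE.
under eq_bigr do rewrite mxE (@D1_entry_odd _ (Ordinal lt_2j) j erefl) mulrDl.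
by rewrite big_split /= sum_colseq sum_colseq_shift [in X in _ + X]mulNr.
Qed.

Lemma phi_D1t z j :
  phi (evens ((D1 k xi)^T *m z) j) (odds ((D1 k xi)^T *m z) j)
  = - N * shift (colseq z) j.
Proof. by rewrite evens_D1t odds_D1t /phi; ring. Qed.

Lemma psi_D1t z j :
  psi (evens ((D1 k xi)^T *m z) j) (odds ((D1 k xi)^T *m z) j)
  = N * colseq z j.
Proof. by rewrite evens_D1t odds_D1t /psi; ring. Qed.

Lemma D0t_D1t (z : 'cV[C]_(k - 1)) : (D0 k xi)^T *m ((D1 k xi)^T *m z) = 0.
Proof.
apply/colP => c; rewrite D0t_mul phi_D1t mxE.
by case: c => [[|c] _] /=; rewrite ?psi_D1t mulNr ?mulr0 ?oppr0 ?addr0 ?addNr.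
Qed.

Hypothesis N_neq0 : N != 0.

Lemma D1t_inj (z : 'cV[C]_(k - 1)) : (D1 k xi)^T *m z = 0 -> z = 0.
Proof.
move=> D1z0; apply/colP => j; rewrite -colseq_ord mxE; apply: (mulfI N_neq0).
by rewrite -psi_D1t D1z0 /evens /odds !colseq0 mulr0 psi0.
Qed.

Lemma D0t_surj : (0 < k)%N -> forall y : 'cV[C]_k.+1, exists v, (D0 k xi)^T *m v = y.
Proof.
move=> k_gt0 y; pose q j := if j.+1 == k then colseq y k else 0.
exists (interleave k (fun j => unpair1 a a' b b' (colseq y j) (q j))
                     (fun j => unpair2 a a' b b' (colseq y j) (q j))).
apply/colP => c; rewrite D0t_mul -colseq_ord.
have [lt_ck | le_kc] := ltnP c k.
  rewrite evens_interleave // odds_interleave // phi_unpair //.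
  case: (nat_of_ord c) lt_ck => [|c'] lt_ck /=; first by rewrite addr0.
  rewrite evens_interleave ?odds_interleave ?psi_unpair ?(ltnW lt_ck) //.
  by rewrite /q ifN ?addr0 ?neq_ltn ?lt_ck.
have -> : nat_of_ord c = k by have := ltn_ord c; lia.
rewrite evens_out ?odds_out // phi0 add0r shiftE //.
by rewrite evens_interleave ?odds_interleave ?psi_unpair ?ltn_predL // /q prednK // eqxx.
Qed.

Lemma ker_D0t_sub_im_D1t (v : 'cV[C]_(2 * k)) :
  (D0 k xi)^T *m v = 0 -> exists z, (D1 k xi)^T *m z = v.
Proof.
move=> D0v0; pose p j := phi (evens v j) (odds v j); pose q j := psi (evens v j) (odds v j).
have pq_rel c : p c + shift q c = 0.
  have [le_ck | lt_kc] := leqP c k.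
    by move/colP/(_ (Ordinal (le_ck : c < k.+1)%N)): D0v0; rewrite D0t_mul mxE.
  rewrite /p evens_out ?odds_out ?(ltnW lt_kc) // phi0 add0r shiftE ?(leq_ltn_trans _ lt_kc) //.
  by rewrite /q evens_out ?odds_out ?psi0 //; lia.
have q_out j : (k <= j.+1)%N -> q j = 0.
  by move=> le_kj; have := pq_rel j.+1; rewrite /p evens_out ?odds_out // phi0 add0r.
exists (\col_(j < k - 1) (q j / N)).
set z := \col_(j < _) _.
have colseq_z j : colseq z j = q j / N.
  have [lt_jk | le_kj] := ltnP j (k - 1); first by rewrite (colseq_col (fun j => q j / _)).
  by rewrite colseq_out // q_out ?mul0r //; lia.
suff E j : evens ((D1 k xi)^T *m z) j = evens v j /\ odds ((D1 k xi)^T *m z) j = odds v j.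
  by apply: eq_evens_odds => j; case: (E j).
apply: (phi_psi_inj N_neq0); last by rewrite psi_D1t colseq_z mulrC divfK.
rewrite phi_D1t (_ : shift (colseq z) j = shift q j / N); last first.
  by case: j => [|j] /=; rewrite ?colseq_z ?mul0r.
rewrite -/(p j); move/eqP: (pq_rel j); rewrite addr_eq0 => /eqP ->.
by rewrite mulNr mulrC divfK.
Qed.
End Symbols.

Theorem lemma4p1 (k : nat) (hk : (2 <= k)%N) (xi : 'I_4 -> Rdefinitions.R)
  (hxi : exists l : 'I_4, xi l <> 0%R) :
  (* D_0^t : C^{2k} -> C^{k+1} is surjective *)
  (forall y : 'cV[C]_(k.+1), exists v : 'cV[C]_((2 * k)%N), (D0 k xi)^T *m v = y) /\
  (* D_1^t : C^{k-1} -> C^{2k} is injective *)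
  (forall z : 'cV[C]_((k - 1)%N), (D1 k xi)^T *m z = 0 -> z = 0) /\
  (* Im D_1^t = ker D_0^t *)
  (forall v : 'cV[C]_((2 * k)%N),
     (D0 k xi)^T *m v = 0 <-> exists z : 'cV[C]_((k - 1)%N), (D1 k xi)^T *m z = v).
Proof.
have N_neq0 := sym_norm_neq0 hxi.
split; first exact: D0t_surj N_neq0 (ltnW hk).
split; first exact: D1t_inj N_neq0.
move=> v; split; first exact: (ker_D0t_sub_im_D1t N_neq0).
by case=> z <-; exact: D0t_D1t.
Qed.
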